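(* Let $R$ be a commutative ring, $I=(f_1,\dots,f_r)$, $\mathfrak a=(a_1,\dots,a_s)\subseteq I$, $\Phi=(c_{ij})$ an $r\times s$ matrix with $a_j=\sum_ic_{ij}f_i$, $\Gamma_\bullet$ as in the context, and $B_\bullet=B_\bullet(\mathbf f;R)$ the Koszul boundaries. Then $\langle\Gamma_\bullet\cdot B_\bullet\rangle_r=\mathfrak a$.
   Context: $K_\bullet(\mathbf f;R)$ is the Koszul DG algebra: exterior algebra over $R$ on $e_1,\dots,e_r$ with $\partial e_i=f_i$; $B_k=\partial(K_{k+1})$. $\zeta_j=\sum_ic_{ij}e_i$ and $\Gamma_\bullet$ is the $R$-subalgebra generated by $\zeta_1,\dots,\zeta_s$. $\langle\Gamma_\bullet\cdot B_\bullet\rangle_r$ is the $R$-span in $K_r$ of the products $\gamma\wedge b$ with $\gamma\in\Gamma_j$, $b\in B_{r-j}$, identified with an ideal of $R$ via $K_r=Re_1\wedge\cdots\wedge e_r\cong R$. *)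

From HB Require Import structures.
From mathcomp Require Import all_boot all_order all_algebra.
Set Implicit Arguments. Unset Strict Implicit. Unset Printing Implicit Defensive.
Import GRing.Theory.
Local Open Scope ring_scope.

(* Koszul DG algebra K(f;R) = exterior algebra over R on e_1..e_r.
   An element is represented by its coordinates on the basis
   e_S = e_{i1} /\ ... /\ e_{ik} (i1 < ... < ik), S = {i1,...,ik} : {set 'I_r}. *)
Definition kosz (R : comPzRingType) (r : nat) := {ffun {set 'I_r} -> R}.

Section Koszul.
Variables (R : comPzRingType) (r : nat).
Implicit Types (x y : kosz R r) (S T U : {set 'I_r}).

Definition kzero : kosz R r := [ffun _ => 0].
Definition kadd x y : kosz R r := [ffun U => x U + y U].
Definition kscale (a : R) x : kosz R r := [ffun U => a * x U].

Definition kbasis S : kosz R r := [ffun U => (U == S)%:R].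
Definition kone : kosz R r := kbasis set0.
Definition ktop : kosz R r := kbasis setT.

(* sign of e_S /\ e_T = sgn S T * e_(S :|: T) for disjoint S, T *)
Definition ksgn S T : R :=
  (-1) ^+ #|[set p : 'I_r * 'I_r | [&& p.1 \in S, p.2 \in T & (p.2 < p.1)%N]]|.

Definition kwedge x y : kosz R r :=
  [ffun U => \sum_(S : {set 'I_r}) \sum_(T : {set 'I_r} | [disjoint S & T] && (S :|: T == U))
               ksgn S T * x S * y T].

Definition khomog (k : nat) x : Prop := forall S, #|S| != k -> x S = 0.

Definition kdiff (f : 'I_r -> R) x : kosz R r :=
  [ffun U => \sum_(S : {set 'I_r}) \sum_(i in S | S :\ i == U)
               (-1) ^+ #|[set l in S | (l < i)%N]| * f i * x S].

Definition kbound (f : 'I_r -> R) (k : nat) x : Prop :=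
  exists y, khomog k.+1 y /\ x = kdiff f y.

Definition kzeta (s : nat) (c : 'M[R]_(r, s)) (j : 'I_s) : kosz R r :=
  [ffun U => \sum_(i : 'I_r) (U == [set i])%:R * c i j].

Inductive kGamma (s : nat) (c : 'M[R]_(r, s)) : kosz R r -> Prop :=
| kGamma_one : kGamma c kone
| kGamma_gen j : kGamma c (kzeta c j)
| kGamma_add x y : kGamma c x -> kGamma c y -> kGamma c (kadd x y)
| kGamma_scale a x : kGamma c x -> kGamma c (kscale a x)
| kGamma_mul x y : kGamma c x -> kGamma c y -> kGamma c (kwedge x y).

Inductive kGammaB (f : 'I_r -> R) (s : nat) (c : 'M[R]_(r, s)) : kosz R r -> Prop :=
| kGammaB_gen (j : nat) g b : (j <= r)%N -> kGamma c g -> khomog j g ->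
    kbound f (r - j) b -> kGammaB f c (kwedge g b)
| kGammaB_zero : kGammaB f c kzero
| kGammaB_add x y : kGammaB f c x -> kGammaB f c y -> kGammaB f c (kadd x y)
| kGammaB_scale a x : kGammaB f c x -> kGammaB f c (kscale a x).

End Koszul.

From HB Require Import structures.
From mathcomp Require Import all_boot all_order all_algebra.
From mathcomp Require Import zify ring.
Import GRing.Theory.

(* Let [g] in Gamma be homogeneous of degree [j] and [y] of degree [r - j + 1].
   Then [g ∧ y = 0] for degree reasons, so the graded Leibniz rule
   [∂(g ∧ y) = ∂g ∧ y + (-1)^j g ∧ ∂y] gives [g ∧ ∂y = ±∂g ∧ y].  Since
   [∂zeta_j = a_j] and [∂] is a derivation, [∂g] has all its coordinates in the
   ideal [(a_1, ..., a_s)], hence so does the top coordinate of [g ∧ ∂y].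
   Conversely, for [g = zeta_j] and [y = e_1 ∧ ... ∧ e_r] the same identity reads
   [zeta_j ∧ ∂(e_1 ∧ ... ∧ e_r) = a_j e_1 ∧ ... ∧ e_r]. *)

Set Implicit Arguments.
Unset Strict Implicit.
Unset Printing Implicit Defensive.

Section Counting.
Variable n : nat.
Implicit Types (A B S T : {set 'I_n}) (i : 'I_n).

Definition count_lt S i : nat := \sum_(l in S) (l < i)%N.
Definition count_gt S i : nat := \sum_(l in S) (i < l)%N.
Definition inversions S T : nat := \sum_(p in S) count_lt T p.

Lemma card_count_lt S i : #|[set l in S | (l < i)%N]| = count_lt S i.
Proof.
rewrite -sum1_card /count_lt big_mkcond [RHS]big_mkcond /=; apply: eq_bigr => l _.
by rewrite !inE; case: (l \in S); case: (l < i)%N.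
Qed.

Lemma card_inversions S T :
  #|[set p : 'I_n * 'I_n | [&& p.1 \in S, p.2 \in T & (p.2 < p.1)%N]]| = inversions S T.
Proof.
rewrite -sum1_card /inversions /count_lt pair_big_dep big_mkcond [RHS]big_mkcond /=.
apply: eq_bigr => -[p q] _; rewrite !inE /=.
by case: (p \in S); case: (q \in T); case: (q < p)%N.
Qed.

Lemma count_ltU S T i :
  [disjoint S & T] -> count_lt (S :|: T) i = count_lt S i + count_lt T i.
Proof. by move=> dST; rewrite /count_lt -bigU //; apply: eq_bigl => l; rewrite !inE. Qed.

Lemma count_ltU1 A i j : i \notin A -> count_lt (i |: A) j = (i < j) + count_lt A j.
Proof. by move=> iA; rewrite /count_lt big_setU1. Qed.

Lemma inversionsU1l A T i :
  i \notin A -> inversions (i |: A) T = count_lt T i + inversions A T.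
Proof. by move=> iA; rewrite /inversions big_setU1. Qed.

Lemma inversionsU1r S B i :
  i \notin B -> inversions S (i |: B) = count_gt S i + inversions S B.
Proof.
move=> iB; rewrite /inversions /count_gt -big_split.
by apply: eq_bigr => p _; rewrite count_ltU1.
Qed.

Lemma count_lt_gt A i : i \notin A -> count_lt A i + count_gt A i = #|A|.
Proof.
move=> iA; rewrite /count_lt /count_gt -big_split -sum1_card /=; apply: eq_bigr => l lA.
have: l != i by apply: contraNneq iA => <-.
by rewrite neq_ltn; case: ltngtP.
Qed.

End Counting.

Local Open Scope ring_scope.

Lemma signr_eqmod2 (R : pzRingType) m n : m = n %[mod 2] -> (-1) ^+ m = (-1) ^+ n :> R.
Proof.
rewrite !modn2 => e; rewrite -signr_odd -[RHS]signr_odd; congr (_ ^+ _).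
by move: e; case: odd; case: odd.
Qed.

Lemma signr_add_eqmod2 (R : pzRingType) m n :
  n = m.+1 %[mod 2] -> (-1) ^+ m + (-1) ^+ n = 0 :> R.
Proof. by move/signr_eqmod2->; rewrite exprS mulN1r addrN. Qed.

Lemma disjointsU1 (T : finType) (x : T) (A B : {set T}) :
  [disjoint x |: A & B] = (x \notin B) && [disjoint A & B].
Proof. by rewrite -disjointU1; apply: eq_disjoint => y; rewrite !inE. Qed.

Lemma disjointsU1r (T : finType) (x : T) (A B : {set T}) :
  [disjoint A & x |: B] = (x \notin A) && [disjoint A & B].
Proof. by rewrite disjoint_sym disjointsU1 disjoint_sym. Qed.

Lemma setU1_split (T : finType) (x : T) (S : {set T}) :
  x \in S -> exists2 A : {set T}, x \notin A & S = x |: A.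
Proof. by move=> xS; exists (S :\ x); [rewrite !inE eqxx | rewrite setD1K]. Qed.

Lemma sum_if_eq (M : nmodType) (J : finType) (j0 : J) (C : pred J) (F : J -> M) :
  \sum_j (if C j && (j0 == j) then F j else 0) = if C j0 then F j0 else 0.
Proof.
rewrite (bigD1 j0) //= eqxx andbT big1 ?addr0 // => j nj.
by rewrite eq_sym (negbTE nj) andbF.
Qed.

Section KoszulCalculus.
Variables (R : comPzRingType) (r : nat) (f : 'I_r -> R).
Implicit Types (x y : kosz R r) (A B S T U : {set 'I_r}) (i : 'I_r).

Definition kinvol x : kosz R r := [ffun S : {set 'I_r} => (-1) ^+ #|S| * x S].

Definition kdsign S i : R := (-1) ^+ #|[set l in S | (l < i)%N]|.

Lemma kdsignE S i : kdsign S i = (-1) ^+ count_lt S i.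
Proof. by rewrite /kdsign card_count_lt. Qed.

Lemma ksgnE S T : ksgn R S T = (-1) ^+ inversions S T.
Proof. by rewrite /ksgn card_inversions. Qed.

Lemma kdsign_set1 i : kdsign [set i] i = 1.
Proof. by rewrite kdsignE /count_lt big_set1 ltnn. Qed.

Lemma sign_contract_left A T i :
  i \notin A -> i \notin T -> [disjoint A & T] ->
  kdsign ((i |: A) :|: T) i * ksgn R (i |: A) T = ksgn R A T * kdsign (i |: A) i.
Proof.
move=> iA iT dAT; rewrite !kdsignE !ksgnE count_ltU ?disjointsU1 ?iT //.
rewrite inversionsU1l // count_ltU1 // ltnn -!exprD; apply: signr_eqmod2; lia.
Qed.

Lemma sign_contract_right S B i :
  i \notin S -> i \notin B -> [disjoint S & B] ->
  kdsign (S :|: (i |: B)) i * ksgn R S (i |: B) =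
  (-1) ^+ #|S| * ksgn R S B * kdsign (i |: B) i.
Proof.
move=> iS iB dSB; rewrite !kdsignE !ksgnE count_ltU ?disjointsU1r ?iS //.
rewrite inversionsU1r // count_ltU1 // ltnn -(count_lt_gt iS) -!exprD.
apply: signr_eqmod2; lia.
Qed.

Lemma sign_contract_both A B i :
  i \notin A -> i \notin B ->
  ksgn R A (i |: B) * kdsign (i |: A) i +
  (-1) ^+ #|i |: A| * ksgn R (i |: A) B * kdsign (i |: B) i = 0.
Proof.
move=> iA iB; rewrite !kdsignE !ksgnE inversionsU1r // inversionsU1l //.
rewrite !count_ltU1 // ltnn cardsU1 iA -(count_lt_gt iA) -!exprD; apply: signr_add_eqmod2; lia.
Qed.

(* The coefficients of [f i * x S * y T] in the [U]-coordinates of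
   [kdiff f (kwedge x y)], [kwedge (kdiff f x) y] and [kwedge (kinvol x) (kdiff f y)]. *)
Definition kdiff_wedge_coef S T i U : R :=
  if [disjoint S & T] && ((i \in S :|: T) && ((S :|: T) :\ i == U))
  then kdsign (S :|: T) i * ksgn R S T else 0.

Definition kdiffl_wedge_coef S T i U : R :=
  if (i \in S) && ([disjoint S :\ i & T] && ((S :\ i) :|: T == U))
  then ksgn R (S :\ i) T * kdsign S i else 0.

Definition kdiffr_wedge_coef S T i U : R :=
  if (i \in T) && ([disjoint S & T :\ i] && (S :|: (T :\ i) == U))
  then (-1) ^+ #|S| * ksgn R S (T :\ i) * kdsign T i else 0.

Lemma kdiff_wedge_coefE S T i U :
  kdiff_wedge_coef S T i U = kdiffl_wedge_coef S T i U + kdiffr_wedge_coef S T i U.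
Proof.
rewrite /kdiff_wedge_coef /kdiffl_wedge_coef /kdiffr_wedge_coef.
case: (boolP (i \in S)) => [/setU1_split[A iA ->]|iS];
  case: (boolP (i \in T)) => [/setU1_split[B iB ->]|iT].
- rewrite !setU1K // !(disjointsU1, disjointsU1r) !inE eqxx iA iB /=.
  have -> : A :|: (i |: B) = i |: A :|: B by rewrite setUCA setUA.
  by case: ifP; rewrite ?sign_contract_both ?addr0.
- have -> : (i |: A :|: T) :\ i = A :|: T.
    by rewrite -setUA setU1K // !inE negb_or iA.
  rewrite setU1K // !inE eqxx disjointsU1 iT /= addr0.
  by case: ifP => // /andP[dAT _]; rewrite sign_contract_left.
- have -> : (S :|: (i |: B)) :\ i = S :|: B.
    by rewrite setUCA setU1K // !inE negb_or iS.
  rewrite setU1K // !inE eqxx orbT disjointsU1r iS /= add0r.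
  by case: ifP => // /andP[dSB _]; rewrite sign_contract_right.
- by rewrite !inE (negbTE iS) (negbTE iT) /= andbF add0r.
Qed.

Lemma kdiff_kwedge_coord x y U :
  kdiff f (kwedge x y) U =
  \sum_S \sum_T \sum_i kdiff_wedge_coef S T i U * (f i * x S * y T).
Proof.
rewrite ffunE.
transitivity (\sum_(V : {set 'I_r}) \sum_(i < r) \sum_(S : {set 'I_r}) \sum_(T : {set 'I_r})
  (if (i \in V) && (V :\ i == U) && [disjoint S & T] && (S :|: T == V)
   then kdsign V i * f i * (ksgn R S T * x S * y T) else 0)).
  apply: eq_bigr => V _; rewrite big_mkcond; apply: eq_bigr => i _; rewrite ffunE.
  case: ifP => _; last by rewrite big1 // => S _; rewrite big1.
  rewrite mulr_sumr; apply: eq_bigr => S _.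
  by rewrite mulr_sumr big_mkcond; apply: eq_bigr => T _; case: ifP.
rewrite exchange_big /=.
under eq_bigr do rewrite exchange_big /=.
under eq_bigr do under eq_bigr do rewrite exchange_big /=.
rewrite exchange_big /=.
under eq_bigr do rewrite exchange_big /=.
apply: eq_bigr => S _; apply: eq_bigr => T _; apply: eq_bigr => i _.
rewrite sum_if_eq /kdiff_wedge_coef andbC; case: ifP => _; last by rewrite mul0r.
rewrite /kdsign; ring.
Qed.

Lemma kwedge_kdiffl_coord x y U :
  kwedge (kdiff f x) y U =
  \sum_S \sum_T \sum_i kdiffl_wedge_coef S T i U * (f i * x S * y T).
Proof.
rewrite ffunE.
transitivity (\sum_(S' : {set 'I_r}) \sum_(T : {set 'I_r}) \sum_(S : {set 'I_r}) \sum_(i < r)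
  (if [disjoint S' & T] && (S' :|: T == U) && (i \in S) && (S :\ i == S')
   then ksgn R S' T * (kdsign S i * f i * x S) * y T else 0)).
  apply: eq_bigr => S' _; rewrite big_mkcond; apply: eq_bigr => T _; rewrite ffunE.
  case: ifP => _; last by rewrite big1 // => S _; rewrite big1.
  rewrite mulr_sumr mulr_suml; apply: eq_bigr => S _.
  rewrite mulr_sumr mulr_suml big_mkcond; apply: eq_bigr => i _.
  by case: ifP => _; rewrite ?mulr0 ?mul0r.
under eq_bigr do rewrite exchange_big /=.
rewrite exchange_big /=.
under eq_bigr do rewrite exchange_big /=.
under eq_bigr do under eq_bigr do rewrite exchange_big /=.
apply: eq_bigr => S _; apply: eq_bigr => T _; apply: eq_bigr => i _.
rewrite sum_if_eq /kdiffl_wedge_coef andbC; case: ifP => _; last by rewrite mul0r.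
rewrite /kdsign; ring.
Qed.

Lemma kwedge_kdiffr_coord x y U :
  kwedge (kinvol x) (kdiff f y) U =
  \sum_S \sum_T \sum_i kdiffr_wedge_coef S T i U * (f i * x S * y T).
Proof.
rewrite ffunE.
transitivity (\sum_(S : {set 'I_r}) \sum_(T' : {set 'I_r}) \sum_(T : {set 'I_r}) \sum_(i < r)
  (if [disjoint S & T'] && (S :|: T' == U) && (i \in T) && (T :\ i == T')
   then ksgn R S T' * ((-1) ^+ #|S| * x S) * (kdsign T i * f i * y T) else 0)).
  apply: eq_bigr => S _; rewrite big_mkcond; apply: eq_bigr => T' _; rewrite !ffunE.
  case: ifP => _; last by rewrite big1 // => T _; rewrite big1.
  rewrite mulr_sumr; apply: eq_bigr => T _.
  rewrite mulr_sumr big_mkcond; apply: eq_bigr => i _.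
  by case: ifP => _; rewrite ?mulr0 ?mul0r.
under eq_bigr do rewrite exchange_big /=.
under eq_bigr do under eq_bigr do rewrite exchange_big /=.
apply: eq_bigr => S _; apply: eq_bigr => T _; apply: eq_bigr => i _.
rewrite sum_if_eq /kdiffr_wedge_coef andbC; case: ifP => _; last by rewrite mul0r.
rewrite /kdsign; ring.
Qed.

Lemma kdiff_kwedge x y :
  kdiff f (kwedge x y) = kadd (kwedge (kdiff f x) y) (kwedge (kinvol x) (kdiff f y)).
Proof.
apply/ffunP => U; rewrite kdiff_kwedge_coord [RHS]ffunE.
rewrite kwedge_kdiffl_coord kwedge_kdiffr_coord -!big_split /=.
apply: eq_bigr => S _; rewrite -big_split; apply: eq_bigr => T _; rewrite -big_split.
by apply: eq_bigr => i _; rewrite kdiff_wedge_coefE mulrDl.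
Qed.

Lemma kdiff0 : kdiff f (kzero R r) = kzero R r.
Proof.
apply/ffunP => U; rewrite !ffunE big1 // => S _.
by rewrite big1 // => i _; rewrite ffunE mulr0.
Qed.

Lemma kdiffD x y : kdiff f (kadd x y) = kadd (kdiff f x) (kdiff f y).
Proof.
apply/ffunP => U; rewrite !ffunE -big_split; apply: eq_bigr => S _.
by rewrite -big_split; apply: eq_bigr => i _; rewrite ffunE mulrDr.
Qed.

Lemma kdiffZ b x : kdiff f (kscale b x) = kscale b (kdiff f x).
Proof.
apply/ffunP => U; rewrite !ffunE mulr_sumr; apply: eq_bigr => S _.
by rewrite mulr_sumr; apply: eq_bigr => i _; rewrite ffunE mulrCA.
Qed.

Lemma kdiff1 : kdiff f (kone R r) = kzero R r.
Proof.
apply/ffunP => U; rewrite !ffunE; apply: big1 => S _; apply: big1 => i /andP[iS _].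
by rewrite ffunE; case: eqP iS => [->|_ _]; rewrite ?inE ?mulr0.
Qed.

Lemma kscale0 x : kscale 0 x = kzero R r.
Proof. by apply/ffunP => U; rewrite !ffunE mul0r. Qed.

Lemma kscale1 x : kscale 1 x = x.
Proof. by apply/ffunP => U; rewrite !ffunE mul1r. Qed.

Lemma kwedgeZl b x y : kwedge (kscale b x) y = kscale b (kwedge x y).
Proof.
apply/ffunP => U; rewrite !ffunE mulr_sumr; apply: eq_bigr => S _.
by rewrite mulr_sumr; apply: eq_bigr => T _; rewrite ffunE mulrCA !mulrA.
Qed.

Lemma kwedge1l x : kwedge (kone R r) x = x.
Proof.
apply/ffunP => U; rewrite ffunE (bigD1 set0) //= [X in _ + X]big1 ?addr0; last first.
  by move=> S nS; apply: big1 => T _; rewrite ffunE (negbTE nS) mulr0 mul0r.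
rewrite (bigD1 U) /=; last by rewrite set0U eqxx andbT -setI_eq0 set0I.
rewrite big1 ?addr0; last first.
  by move=> T /andP[/andP[_ /eqP]]; rewrite set0U => ->; rewrite eqxx.
by rewrite ksgnE /inversions big_set0 ffunE eqxx !mul1r.
Qed.

Lemma kinvol_homog k x : khomog k x -> kinvol x = kscale ((-1) ^+ k) x.
Proof.
move=> xk; apply/ffunP => S; rewrite !ffunE.
by case: (eqVneq #|S| k) => [->|nS] //; rewrite xk // !mulr0.
Qed.

Lemma kwedge_homog_eq0 j k x y :
  khomog j x -> khomog k y -> (r < j + k)%N -> kwedge x y = kzero R r.
Proof.
move=> xj yk ltr; apply/ffunP => U; rewrite !ffunE; apply: big1 => S _.
apply: big1 => T /andP[dST _].
have [eS|nS] := eqVneq #|S| j; last by rewrite xj // mulr0 mul0r.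
have [eT|nT] := eqVneq #|T| k; last by rewrite yk // mulr0.
have : (#|S :|: T| <= r)%N by rewrite -[X in (_ <= X)%N]card_ord max_card.
by rewrite cardsU disjoint_setI0 // cards0 subn0 eS eT leqNgt ltr.
Qed.

Lemma kwedge_kdiffr_swap k x y :
  khomog k x -> kwedge x y = kzero R r ->
  kwedge x (kdiff f y) = kscale (- (-1) ^+ k) (kwedge (kdiff f x) y).
Proof.
move=> xk xy0; have := kdiff_kwedge x y.
rewrite xy0 kdiff0 (kinvol_homog xk) kwedgeZl => /ffunP E.
apply/ffunP => U; move/eqP: (E U); rewrite !ffunE eq_sym addr_eq0 => /eqP ->.
by rewrite mulrN mulNr mulrA -expr2 sqrr_sign mul1r opprK.
Qed.

Lemma ktop_homog : khomog r (ktop R r).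
Proof.
move=> S; rewrite ffunE; have [->|//] := eqVneq S setT.
by rewrite cardsT card_ord !eqxx.
Qed.

Lemma kzeta_homog s (c : 'M[R]_(r, s)) j : khomog 1%N (kzeta c j).
Proof.
move=> S nS; rewrite ffunE big1 // => i _.
have [eS|_] := eqVneq S [set i]; last by rewrite mul0r.
by rewrite eS cards1 in nS.
Qed.

End KoszulCalculus.

Arguments ktop_homog {R r}.

Section Span.
Variables (R : comPzRingType) (s : nat) (a : 'I_s -> R).

Definition in_span (z : R) : Prop := exists u : 'I_s -> R, z = \sum_(j < s) u j * a j.

Lemma in_span0 : in_span 0.
Proof. by exists (fun=> 0); rewrite big1 // => j _; rewrite mul0r. Qed.

Lemma in_spanD z w : in_span z -> in_span w -> in_span (z + w).
Proof.
move=> [u ->] [v ->]; exists (fun j => u j + v j); rewrite -big_split /=.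
by apply: eq_bigr => j _; rewrite mulrDl.
Qed.

Lemma in_spanMl b z : in_span z -> in_span (b * z).
Proof.
move=> [u ->]; exists (fun j => b * u j); rewrite mulr_sumr.
by apply: eq_bigr => j _; rewrite mulrA.
Qed.

Lemma in_spanMr b z : in_span z -> in_span (z * b).
Proof. by rewrite mulrC; apply: in_spanMl. Qed.

Lemma in_span_sum (I : finType) (P : pred I) (F : I -> R) :
  (forall i, P i -> in_span (F i)) -> in_span (\sum_(i | P i) F i).
Proof. exact: (big_ind in_span in_span0 in_spanD). Qed.

Lemma in_span_gen j : in_span (a j).
Proof.
exists (fun k => (k == j)%:R); rewrite (bigD1 j) //= eqxx mul1r big1 ?addr0 // => k nk.
by rewrite (negbTE nk) mul0r.
Qed.

Variable r : nat.
Implicit Types x y : kosz R r.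

Definition kin_span x : Prop := forall S, in_span (x S).

Lemma kin_span0 : kin_span (kzero R r).
Proof. by move=> S; rewrite ffunE; apply: in_span0. Qed.

Lemma kin_spanD x y : kin_span x -> kin_span y -> kin_span (kadd x y).
Proof. by move=> xa ya S; rewrite ffunE; apply: in_spanD. Qed.

Lemma kin_spanZ b x : kin_span x -> kin_span (kscale b x).
Proof. by move=> xa S; rewrite ffunE; apply: in_spanMl. Qed.

Lemma kin_span_wedgel x y : kin_span x -> kin_span (kwedge x y).
Proof.
move=> xa U; rewrite ffunE; apply: in_span_sum => S _; apply: in_span_sum => T _.
exact/in_spanMr/in_spanMl.
Qed.

Lemma kin_span_wedger x y : kin_span y -> kin_span (kwedge x y).
Proof.
move=> ya U; rewrite ffunE; apply: in_span_sum => S _; apply: in_span_sum => T _.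
exact: in_spanMl.
Qed.

End Span.

Section GammaBoundaries.
Variables (R : comPzRingType) (r s : nat) (f : 'I_r -> R).
Variables (a : 'I_s -> R) (c : 'M[R]_(r, s)).
Hypothesis Ha : forall j : 'I_s, a j = \sum_(i < r) c i j * f i.

Lemma kdiff_zeta j : kdiff f (kzeta c j) = kscale (a j) (kone R r).
Proof.
apply/ffunP => U; rewrite !ffunE Ha mulr_suml.
under eq_bigr => S _ do under eq_bigr => i _ do rewrite ffunE mulr_sumr.
under eq_bigr => S _ do rewrite exchange_big /=.
rewrite exchange_big /=; apply: eq_bigr => k _.
rewrite (bigD1 [set k]) //= [X in _ + X]big1 ?addr0; last first.
  by move=> S /negbTE nS; apply: big1 => i _; rewrite nS mul0r mulr0.
rewrite big_mkcondr big_set1 setDv -/(kdsign R [set k] k) kdsign_set1.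
rewrite eqxx mul1r [U == _]eq_sym.
by case: (set0 == U); rewrite ?mulr1n ?mulr0n ?mul1r ?mulr1 ?mulr0 // mulrC.
Qed.

Lemma kdiff_kGamma g : kGamma c g -> kin_span a (kdiff f g).
Proof.
elim=> [|j|x y _ dx _ dy|b x _ dx|x y _ dx _ dy].
- by rewrite kdiff1; apply: kin_span0.
- by rewrite kdiff_zeta => U; rewrite ffunE; apply/in_spanMr/in_span_gen.
- by rewrite kdiffD; apply: kin_spanD.
- by rewrite kdiffZ; apply: kin_spanZ.
- rewrite kdiff_kwedge; apply: kin_spanD; first exact: kin_span_wedgel.
  exact: kin_span_wedger.
Qed.

Lemma kGammaB_top_in_span z : kGammaB f c z -> in_span a (z setT).
Proof.
elim=> [j g _ _ Gg gj [y [yk ->]] | | x y _ xa _ ya | b x _ xa].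
- rewrite (kwedge_kdiffr_swap f gj); last by apply: kwedge_homog_eq0 gj yk _; lia.
  by rewrite ffunE; apply/in_spanMl/kin_span_wedgel/kdiff_kGamma.
- by rewrite ffunE; apply: in_span0.
- by rewrite ffunE; apply: in_spanD.
- by rewrite ffunE; apply: in_spanMl.
Qed.

Lemma kGammaB_top_gen j : kGammaB f c (kscale (a j) (ktop R r)).
Proof.
(* For [r = 0], [(r - 1).+1 = 1] differs from the degree [r] of [ktop], but then [a j = 0]. *)
have [r0|r_gt0] := posnP r.
  have -> : a j = 0.
    by rewrite Ha big1 // => i; move: (ltn_ord i); rewrite [X in (_ < X)%N]r0.
  by rewrite kscale0; apply: kGammaB_zero.
have zeta_top0 : kwedge (kzeta c j) (ktop R r) = kzero R r.
  by apply: kwedge_homog_eq0 (kzeta_homog c j) ktop_homog _; rewrite add1n.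
have := kwedge_kdiffr_swap f (kzeta_homog c j) zeta_top0.
rewrite kdiff_zeta kwedgeZl kwedge1l expr1 opprK kscale1 => <-.
apply: (@kGammaB_gen _ _ f _ c 1) => //.
- exact: kGamma_gen.
- exact: kzeta_homog.
- by exists (ktop R r); rewrite subn1 prednK //; split=> //; exact: ktop_homog.
Qed.

Lemma kGammaB_top_span x : in_span a x -> kGammaB f c (kscale x (ktop R r)).
Proof.
case=> u ->; elim/big_rec: _ => [|j y _ Gy].
  by rewrite kscale0; apply: kGammaB_zero.
have -> : kscale (u j * a j + y) (ktop R r) =
          kadd (kscale (u j) (kscale (a j) (ktop R r))) (kscale y (ktop R r)).
  by apply/ffunP => U; rewrite !ffunE mulrDl mulrA.
by apply: kGammaB_add => //; apply/kGammaB_scale/kGammaB_top_gen.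
Qed.

End GammaBoundaries.

Theorem lemma4p21 (R : comPzRingType) (r s : nat) (f : 'I_r -> R)
    (a : 'I_s -> R) (c : 'M[R]_(r, s))
    (Ha : forall j : 'I_s, a j = \sum_(i < r) c i j * f i) :
  forall x : R,
    (exists y : kosz R r, kGammaB f c y /\ y = kscale x (ktop R r)) <->
    (exists u : 'I_s -> R, x = \sum_(j < s) u j * a j).
Proof.
move=> x; split=> [[y [Gy ey]] | xa].
  by move: (kGammaB_top_in_span Ha Gy); rewrite ey !ffunE eqxx mulr1.
by exists (kscale x (ktop R r)); split=> //; exact: (kGammaB_top_span Ha (x := x)).
Qed.
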